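(* Let $n,m\in\omega\cup\{\infty\}$. Every $C_{n,m}$-homogeneous linear ordering is $sp$-homogeneous.
   Context: For a linear ordering $L$, $s(x)$ is the immediate successor of $x$ if it exists and $x$ otherwise, $p(x)$ the immediate predecessor if it exists and $x$ otherwise; $L$ is $sp$-homogeneous if $(L,<,s,p)$ is homogeneous (every isomorphism between finitely generated substructures extends to an automorphism). For $i\in\omega$: $S_i(x)$ holds iff $x$ has exactly $i$ successors (i.e. exactly $i$ elements $y>x$ with only finitely many elements between $x$ and $y$); $P_j(x)$ holds iff $x$ has exactly $j$ predecessors (defined dually); $Adj_k(x,y)$ holds iff there are exactly $k$ elements strictly between $x$ and $y$. $L$ is $C_{n,m}$-homogeneous if its expansion by the definable relations $\{S_i\}_{i<n}$, $\{P_j\}_{j<m}$, $\{Adj_k\}_{k<n+m}$ (with $i<\infty$ meaning all $i\in\omega$) is homogeneous, i.e. every isomorphism between finite substructures of the expansion extends to an automorphism. *)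

From Stdlib Require Import List Classical ClassicalEpsilon.
Import ListNotations.
Set Implicit Arguments.

Section LinOrd.
Variable L : Type.
Variable lt : L -> L -> Prop.

Definition strict_linear_order : Prop :=
  (forall x, ~ lt x x) /\
  (forall x y z, lt x y -> lt y z -> lt x z) /\
  (forall x y, lt x y \/ x = y \/ lt y x).

Definition finite_set (P : L -> Prop) : Prop :=
  exists l : list L, forall y, P y -> In y l.

Definition has_card (P : L -> Prop) (k : nat) : Prop :=
  exists l : list L, NoDup l /\ length l = k /\ (forall y, P y <-> In y l).

Definition between (x y z : L) : Prop := (lt x z /\ lt z y) \/ (lt y z /\ lt z x).

Definition is_successor (x y : L) : Prop := lt x y /\ finite_set (between x y).
Definition is_predecessor (x y : L) : Prop := lt y x /\ finite_set (between y x).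

Definition S_rel (i : nat) (x : L) : Prop := has_card (is_successor x) i.
Definition P_rel (j : nat) (x : L) : Prop := has_card (is_predecessor x) j.
Definition Adj_rel (k : nat) (x y : L) : Prop := has_card (between x y) k.

Definition imm_succ (x y : L) : Prop := lt x y /\ forall z, ~ (lt x z /\ lt z y).
Definition imm_pred (x y : L) : Prop := lt y x /\ forall z, ~ (lt y z /\ lt z x).

(* s(x): immediate successor if it exists, else x; p(x) dually *)
Definition s_fn (x : L) : L :=
  epsilon (inhabits x)
    (fun y => imm_succ x y \/ ((forall z, ~ imm_succ x z) /\ y = x)).
Definition p_fn (x : L) : L :=
  epsilon (inhabits x)
    (fun y => imm_pred x y \/ ((forall z, ~ imm_pred x z) /\ y = x)).

(* substructure of (L,<,s,p) generated by a finite set F *)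
Inductive gen (F : list L) : L -> Prop :=
| gen_base x : In x F -> gen F x
| gen_s x : gen F x -> gen F (s_fn x)
| gen_p x : gen F x -> gen F (p_fn x).

Definition bijective_fn (g : L -> L) : Prop :=
  (forall x y, g x = g y -> x = y) /\ (forall y, exists x, g x = y).

Definition sp_homogeneous : Prop :=
  forall (F G : list L) (f : L -> L),
    (forall x, gen F x -> gen G (f x)) ->
    (forall y, gen G y -> exists x, gen F x /\ f x = y) ->
    (forall x y, gen F x -> gen F y -> (lt x y <-> lt (f x) (f y))) ->
    (forall x, gen F x -> f (s_fn x) = s_fn (f x)) ->
    (forall x, gen F x -> f (p_fn x) = p_fn (f x)) ->
    exists g : L -> L,
      bijective_fn g /\
      (forall x y, lt x y <-> lt (g x) (g y)) /\
      (forall x, g (s_fn x) = s_fn (g x)) /\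
      (forall x, g (p_fn x) = p_fn (g x)) /\
      (forall x, gen F x -> g x = f x).

(* omega ∪ {∞}: Some n = n, None = ∞ *)
Definition lt_inf (i : nat) (n : option nat) : Prop :=
  match n with Some n => i < n | None => True end.
Definition add_inf (n m : option nat) : option nat :=
  match n, m with Some a, Some b => Some (a + b) | _, _ => None end.

(* (L,<) expanded by {S_i}_{i<n}, {P_j}_{j<m}, {Adj_k}_{k<n+m} is homogeneous *)
Definition Cnm_homogeneous (n m : option nat) : Prop :=
  forall (A B : list L) (f : L -> L),
    (forall x, In x A -> In (f x) B) ->
    (forall y, In y B -> exists x, In x A /\ f x = y) ->
    (forall x y, In x A -> In y A -> (lt x y <-> lt (f x) (f y))) ->
    (forall i x, lt_inf i n -> In x A -> (S_rel i x <-> S_rel i (f x))) ->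
    (forall j x, lt_inf j m -> In x A -> (P_rel j x <-> P_rel j (f x))) ->
    (forall k x y, lt_inf k (add_inf n m) -> In x A -> In y A ->
        (Adj_rel k x y <-> Adj_rel k (f x) (f y))) ->
    exists g : L -> L,
      bijective_fn g /\
      (forall x y, lt x y <-> lt (g x) (g y)) /\
      (forall i x, lt_inf i n -> (S_rel i x <-> S_rel i (g x))) /\
      (forall j x, lt_inf j m -> (P_rel j x <-> P_rel j (g x))) /\
      (forall k x y, lt_inf k (add_inf n m) -> (Adj_rel k x y <-> Adj_rel k (g x) (g y))) /\
      (forall x, In x A -> g x = f x).

End LinOrd.

(** Let [f] be an isomorphism between the [s,p]-closures [D = <F>] and [D' = <G>]
    of two finite sets.  An element [y] is a successor of [x] exactly when
    [y = s^k x > x] for some [k], and every element between them is an [s]-iterate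
    of [x]; dually for predecessors with [p].  Hence successors, predecessors and
    finite intervals of points of [D] stay inside [D], and [f] maps them
    bijectively onto the corresponding sets in [D'].  So the finite map [f|F]
    preserves every [S_i], [P_j] and [Adj_k], and [C_{n,m}]-homogeneity extends
    it to an automorphism [g] of [(L,<)].  Order automorphisms commute with [s]
    and [p], so [g] agrees with [f] on all of [D]. *)
From Stdlib Require Import List Classical ClassicalEpsilon PeanoNat Lia.

Lemma epsilon_or_default_spec {A : Type} (R : A -> Prop) (a : A) :
  R (epsilon (inhabits a) (fun y => R y \/ ((forall z, ~ R z) /\ y = a))) \/
  ((forall z, ~ R z) /\
   epsilon (inhabits a) (fun y => R y \/ ((forall z, ~ R z) /\ y = a)) = a).
Proof.
  apply (epsilon_spec (inhabits a) (fun y => R y \/ ((forall z, ~ R z) /\ y = a))).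
  destruct (classic (exists y, R y)) as [[y Ry] | noR].
  - exists y; left; exact Ry.
  - exists a; right; split; [intros z Rz; apply noR; exists z; exact Rz | reflexivity].
Qed.

Lemma finite_set_ext {A : Type} (P Q : A -> Prop) :
  (forall z, P z <-> Q z) -> finite_set P -> finite_set Q.
Proof. intros PQ [l Hl]; exists l; intros z Qz; apply Hl, PQ, Qz. Qed.

Lemma has_card_finite {A : Type} (P : A -> Prop) k : has_card P k -> finite_set P.
Proof. intros (l & _ & _ & Hl); exists l; intros z; apply Hl. Qed.

Lemma lift_list {A B : Type} (P : A -> Prop) (h : A -> B) (l' : list B) :
  (forall y, In y l' -> exists x, P x /\ h x = y) ->
  exists l, map h l = l' /\ forall x, In x l -> P x.
Proof.
  induction l' as [|y l' IH]; intros Hl'.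
  - exists nil; split; [reflexivity | intros x []].
  - destruct (Hl' y (or_introl eq_refl)) as (x & Px & <-).
    destruct IH as (l & Hmap & Hl); [intros y' Hy'; apply Hl'; right; exact Hy' |].
    exists (x :: l); split; [simpl; rewrite Hmap; reflexivity |].
    intros x' [<- | Hx']; auto.
Qed.

Lemma has_card_image {A B : Type} (P : A -> Prop) (Q : B -> Prop) (h : A -> B) k :
  (forall x y, P x -> P y -> h x = h y -> x = y) ->
  (forall y, Q y <-> exists x, P x /\ h x = y) ->
  has_card P k <-> has_card Q k.
Proof.
  intros h_inj HQ; split.
  - intros (l & l_nodup & l_len & Hl). exists (map h l); split; [|split].
    + apply NoDup_map_NoDup_ForallPairs; [|exact l_nodup].
      intros x y Hx Hy; apply h_inj; apply Hl; assumption.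
    + rewrite length_map; exact l_len.
    + intros y; split.
      * intros Qy. apply HQ in Qy as (x & Px & <-). apply in_map, Hl, Px.
      * intros Hy. apply in_map_iff in Hy as (x & <- & Hx).
        apply HQ; exists x; split; [apply Hl, Hx | reflexivity].
  - intros (l' & l'_nodup & l'_len & Hl').
    destruct (lift_list P h l') as (l & <- & Hl); [intros y Hy; apply HQ, Hl', Hy |].
    exists l; split; [|split].
    + exact (NoDup_map_inv h l l'_nodup).
    + rewrite <- l'_len, length_map; reflexivity.
    + intros x; split; [| apply Hl].
      intros Px. assert (Hhx : In (h x) (map h l)) by (apply Hl', HQ; exists x; auto).
      apply in_map_iff in Hhx as (x' & Ex & Hx'). rewrite <- (h_inj x' x); auto.
Qed.

Section Successors.
Context {L : Type} {lt : L -> L -> Prop} (slo : strict_linear_order lt).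

Local Notation s := (s_fn lt).

Let lt_irrefl : forall x, ~ lt x x := proj1 slo.
Let lt_trans {x y z} : lt x y -> lt y z -> lt x z := proj1 (proj2 slo) x y z.
Let lt_total : forall x y, lt x y \/ x = y \/ lt y x := proj2 (proj2 slo).

Lemma between_sym x y z : between lt x y z <-> between lt y x z.
Proof. unfold between; tauto. Qed.

Lemma imm_succ_unique x y y' : imm_succ lt x y -> imm_succ lt x y' -> y = y'.
Proof.
  intros [xy y_first] [xy' y'_first].
  destruct (lt_total y y') as [H | [H | H]]; [| exact H |]; exfalso.
  - apply (y'_first y); split; assumption.
  - apply (y_first y'); split; assumption.
Qed.

Lemma s_fn_spec x : imm_succ lt x (s x) \/ ((forall z, ~ imm_succ lt x z) /\ s x = x).
Proof. exact (epsilon_or_default_spec (imm_succ lt x) x). Qed.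

Lemma s_fn_unique x y :
  imm_succ lt x y \/ ((forall z, ~ imm_succ lt x z) /\ y = x) -> s x = y.
Proof.
  intros Hy.
  destruct (s_fn_spec x) as [Hs | [no_succ Hs]]; destruct Hy as [Hy | [no_succ' ->]].
  - exact (imm_succ_unique x _ _ Hs Hy).
  - exfalso; exact (no_succ' _ Hs).
  - exfalso; exact (no_succ _ Hy).
  - exact Hs.
Qed.

Lemma s_fn_eq x y : imm_succ lt x y -> s x = y.
Proof. intros Hy; apply s_fn_unique; left; exact Hy. Qed.

Lemma iter_s_between k x z :
  lt x z -> lt z (Nat.iter k s x) -> exists j, j < k /\ z = Nat.iter j s x.
Proof.
  intros xz; induction k as [|k IH]; intros z_lt.
  - exfalso; apply (lt_irrefl x); exact (lt_trans xz z_lt).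
  - rewrite Nat.iter_succ in z_lt.
    destruct (s_fn_spec (Nat.iter k s x)) as [[_ w_first] | [_ Hs]].
    + destruct (lt_total z (Nat.iter k s x)) as [H | [H | H]].
      * destruct (IH H) as (j & jk & ->); exists j; split; [lia | reflexivity].
      * exists k; split; [lia | exact H].
      * exfalso; apply (w_first z); split; assumption.
    + rewrite Hs in z_lt.
      destruct (IH z_lt) as (j & jk & ->); exists j; split; [lia | reflexivity].
Qed.

Lemma is_successor_iter k x : lt x (Nat.iter k s x) -> is_successor lt x (Nat.iter k s x).
Proof.
  intros Hx; split; [exact Hx |].
  exists (map (fun j => Nat.iter j s x) (seq 0 k)).
  intros z [[xz z_lt] | [Hz zx]].
  - destruct (iter_s_between k x z xz z_lt) as (j & jk & ->).
    apply (in_map (fun j => Nat.iter j s x)), in_seq; lia.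
  - exfalso; apply (lt_irrefl x); exact (lt_trans Hx (lt_trans Hz zx)).
Qed.

(* Split the interval at any point [a] of the covering list: both halves are
   covered by the rest of the list. *)
Lemma finite_interval_iter (l : list L) x y :
  lt x y -> (forall z, lt x z -> lt z y -> In z l) -> exists k, y = Nat.iter k s x.
Proof.
  revert x y; induction l as [|a l IH]; intros x y xy Hl.
  - exists 1; simpl; symmetry; apply s_fn_eq.
    split; [exact xy | intros z [xz zy]; exact (Hl z xz zy)].
  - assert (Hrest : forall u v, ~ (lt u a /\ lt a v) -> (lt x u \/ x = u) ->
              (lt v y \/ v = y) -> forall z, lt u z -> lt z v -> In z l).
    { intros u v a_out xu vy z uz zv.
      assert (xz : lt x z) by (destruct xu as [xu | <-]; [exact (lt_trans xu uz) | exact uz]).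
      assert (zy : lt z y) by (destruct vy as [vy | ->]; [exact (lt_trans zv vy) | exact zv]).
      destruct (Hl z xz zy) as [Eaz | Hz]; [| exact Hz].
      subst z; exfalso; apply a_out; split; assumption. }
    destruct (classic (lt x a /\ lt a y)) as [[xa ay] | a_out].
    + destruct (IH x a xa) as [i Hi].
      { apply Hrest; auto. intros [_ aa]; exact (lt_irrefl a aa). }
      destruct (IH a y ay) as [j Hj].
      { apply Hrest; auto. intros [aa _]; exact (lt_irrefl a aa). }
      exists (j + i); rewrite Nat.iter_add, <- Hi; exact Hj.
    + apply IH; [exact xy |]. apply Hrest; auto.
Qed.

Lemma is_successor_iter_inv x y : is_successor lt x y -> exists k, y = Nat.iter k s x.
Proof.
  intros [xy [l Hl]]; apply (finite_interval_iter l x y xy).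
  intros z xz zy; apply Hl; left; split; assumption.
Qed.

Lemma finite_between_iff x y :
  finite_set (between lt x y) <-> is_successor lt x y \/ x = y \/ is_successor lt y x.
Proof.
  split.
  - intros Hfin. destruct (lt_total x y) as [xy | [Exy | yx]].
    + left; split; assumption.
    + right; left; exact Exy.
    + right; right; split; [exact yx |].
      apply (finite_set_ext _ _ (between_sym x y)), Hfin.
  - intros [[_ Hfin] | [<- | [_ Hfin]]].
    + exact Hfin.
    + exists nil; intros z [[xz zx] | [xz zx]]; exfalso;
        apply (lt_irrefl x); exact (lt_trans xz zx).
    + apply (finite_set_ext _ _ (between_sym y x)), Hfin.
Qed.

Section Closure.
Variable E : L -> Prop.
Hypothesis E_s_closed : forall x, E x -> E (s x).

Lemma successor_closed x y : E x -> is_successor lt x y -> E y.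
Proof.
  intros Ex Hy; destruct (is_successor_iter_inv x y Hy) as [k ->].
  apply Nat.iter_invariant; assumption.
Qed.

Lemma successor_interval_closed x y z :
  E x -> is_successor lt x y -> between lt x y z -> E z.
Proof.
  intros Ex Hy Hz; destruct (is_successor_iter_inv x y Hy) as [k ->].
  destruct Hz as [[xz zy] | [yz zx]].
  - destruct (iter_s_between k x z xz zy) as (j & _ & ->).
    apply Nat.iter_invariant; assumption.
  - exfalso; destruct Hy as [xy _]; apply (lt_irrefl x).
    exact (lt_trans xy (lt_trans yz zx)).
Qed.

End Closure.

Section Automorphism.
Variable g : L -> L.
Hypothesis g_bij : bijective_fn g.
Hypothesis g_order : forall x y, lt x y <-> lt (g x) (g y).

Lemma imm_succ_automorphism x y : imm_succ lt x y <-> imm_succ lt (g x) (g y).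
Proof.
  destruct g_bij as [_ g_onto]; split; intros [xy y_first].
  - split; [apply (g_order x y), xy |].
    intros w [xw wy]; destruct (g_onto w) as [z <-].
    apply (y_first z); split; [apply (g_order x z) | apply (g_order z y)]; assumption.
  - split; [apply (g_order x y), xy |].
    intros z [xz zy]; apply (y_first (g z)).
    split; [apply (g_order x z) | apply (g_order z y)]; assumption.
Qed.

Lemma s_fn_automorphism x : g (s x) = s (g x).
Proof.
  symmetry; apply s_fn_unique.
  destruct (s_fn_spec x) as [Hs | [no_succ ->]].
  - left; apply (imm_succ_automorphism x (s x)), Hs.
  - right; split; [| reflexivity].
    intros w Hw; destruct (proj2 g_bij w) as [z <-].
    apply (no_succ z), (imm_succ_automorphism x z), Hw.
Qed.

End Automorphism.

End Successors.

Definition dual_order {L : Type} (lt : L -> L -> Prop) (x y : L) : Prop := lt y x.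

Section Duality.
Context {L : Type} {lt : L -> L -> Prop} (slo : strict_linear_order lt).

Lemma strict_linear_order_dual : strict_linear_order (dual_order lt).
Proof.
  destruct slo as (irr & trans & total); unfold dual_order; split; [| split].
  - exact irr.
  - intros x y z xy yz; exact (trans z y x yz xy).
  - intros x y; destruct (total x y) as [H | [H | H]]; auto.
Qed.

Lemma between_dual x y z : between (dual_order lt) x y z <-> between lt x y z.
Proof. unfold between, dual_order; tauto. Qed.

Lemma p_fn_spec x : imm_pred lt x (p_fn lt x) \/ ((forall z, ~ imm_pred lt x z) /\ p_fn lt x = x).
Proof. exact (epsilon_or_default_spec (imm_pred lt x) x). Qed.

Lemma imm_succ_dual x y : imm_succ (dual_order lt) x y <-> imm_pred lt x y.
Proof. unfold imm_succ, imm_pred, dual_order; firstorder. Qed.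

Lemma s_fn_dual x : s_fn (dual_order lt) x = p_fn lt x.
Proof.
  apply (s_fn_unique strict_linear_order_dual).
  destruct (p_fn_spec x) as [Hp | [no_pred Hp]].
  - left; apply imm_succ_dual, Hp.
  - right; split; [intros z Hz; apply (no_pred z), imm_succ_dual, Hz | exact Hp].
Qed.

Lemma is_successor_dual x y : is_successor (dual_order lt) x y <-> is_predecessor lt x y.
Proof.
  split; intros [yx Hfin]; split; try exact yx;
    refine (finite_set_ext _ _ _ Hfin); intros z; unfold between, dual_order; tauto.
Qed.

Lemma p_fn_automorphism g :
  bijective_fn g -> (forall x y, lt x y <-> lt (g x) (g y)) ->
  forall x, g (p_fn lt x) = p_fn lt (g x).
Proof.
  intros g_bij g_order x; rewrite <- !s_fn_dual.
  apply (s_fn_automorphism strict_linear_order_dual g g_bij).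
  intros u v; apply g_order.
Qed.

Section Closure.
Variable E : L -> Prop.
Hypothesis E_s_closed : forall x, E x -> E (s_fn lt x).
Hypothesis E_p_closed : forall x, E x -> E (p_fn lt x).

Let E_dual_closed x : E x -> E (s_fn (dual_order lt) x).
Proof. rewrite s_fn_dual; apply E_p_closed. Qed.

Lemma predecessor_closed x y : E x -> is_predecessor lt x y -> E y.
Proof.
  intros Ex Hy; apply is_successor_dual in Hy.
  exact (successor_closed strict_linear_order_dual E E_dual_closed x y Ex Hy).
Qed.

Lemma finite_interval_closed x y z :
  E x -> finite_set (between lt x y) -> between lt x y z -> E z.
Proof.
  intros Ex Hfin Hz.
  destruct slo as (irr & trans & total).
  destruct (total x y) as [xy | [<- | yx]].
  - exact (successor_interval_closed slo E E_s_closed x y z Ex (conj xy Hfin) Hz).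
  - exfalso; destruct Hz as [[xz zx] | [xz zx]]; exact (irr x (trans _ _ _ xz zx)).
  - apply (successor_interval_closed strict_linear_order_dual E E_dual_closed x y z Ex).
    + split; [exact yx | refine (finite_set_ext _ _ _ Hfin)].
      intros w; symmetry; apply between_dual.
    + apply between_dual, Hz.
Qed.

End Closure.

End Duality.

Section Transport.
Context {L : Type} {lt : L -> L -> Prop} (slo : strict_linear_order lt).
Variables (D D' : L -> Prop) (h : L -> L).
Hypothesis D_s_closed : forall x, D x -> D (s_fn lt x).
Hypothesis D_p_closed : forall x, D x -> D (p_fn lt x).
Hypothesis D'_s_closed : forall x, D' x -> D' (s_fn lt x).
Hypothesis D'_p_closed : forall x, D' x -> D' (p_fn lt x).
Hypothesis h_maps : forall x, D x -> D' (h x).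
Hypothesis h_onto : forall y, D' y -> exists x, D x /\ h x = y.
Hypothesis h_order : forall x y, D x -> D y -> (lt x y <-> lt (h x) (h y)).
Hypothesis h_s_fn : forall x, D x -> h (s_fn lt x) = s_fn lt (h x).

Lemma partial_iso_injective x y : D x -> D y -> h x = h y -> x = y.
Proof.
  intros Dx Dy Ehxy; destruct slo as (irr & _ & total).
  destruct (total x y) as [xy | [Exy | yx]]; [| exact Exy |]; exfalso.
  - apply (h_order x y Dx Dy) in xy; rewrite Ehxy in xy; exact (irr _ xy).
  - apply (h_order y x Dy Dx) in yx; rewrite Ehxy in yx; exact (irr _ yx).
Qed.

Lemma partial_iso_iter_s k x :
  D x -> h (Nat.iter k (s_fn lt) x) = Nat.iter k (s_fn lt) (h x).
Proof.
  intros Dx; induction k as [| k IH]; [reflexivity |].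
  rewrite !Nat.iter_succ, h_s_fn, IH; [reflexivity |].
  apply Nat.iter_invariant; assumption.
Qed.

Lemma is_successor_transport x y :
  D x -> D y -> is_successor lt x y <-> is_successor lt (h x) (h y).
Proof.
  intros Dx Dy; split; intros Hy; pose proof (proj1 Hy) as xy.
  - apply (h_order x y Dx Dy) in xy.
    destruct (is_successor_iter_inv slo x y Hy) as [k Ek]; subst y.
    rewrite partial_iso_iter_s in * by exact Dx.
    apply (is_successor_iter slo), xy.
  - destruct (is_successor_iter_inv slo _ _ Hy) as [k Ek].
    rewrite <- partial_iso_iter_s in Ek by exact Dx.
    apply partial_iso_injective in Ek; [| exact Dy | apply Nat.iter_invariant; assumption].
    apply (h_order x y Dx Dy) in xy.
    subst y; apply (is_successor_iter slo), xy.
Qed.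

Lemma finite_between_transport x y :
  D x -> D y -> finite_set (between lt x y) <-> finite_set (between lt (h x) (h y)).
Proof.
  intros Dx Dy.
  rewrite !(finite_between_iff slo), (is_successor_transport x y), (is_successor_transport y x)
    by assumption.
  split; intros [Hs | [Exy | Hs]]; auto.
  - rewrite Exy; auto.
  - right; left; apply partial_iso_injective; assumption.
Qed.

Lemma has_card_transport (P Q : L -> Prop) k :
  (forall z, P z -> D z) -> (forall w, Q w -> D' w) -> (forall z, D z -> P z <-> Q (h z)) ->
  has_card P k <-> has_card Q k.
Proof.
  intros PD QD' PQ; apply has_card_image with h.
  - intros x y Px Py; apply partial_iso_injective; auto.
  - intros w; split.
    + intros Qw; destruct (h_onto w (QD' w Qw)) as (z & Dz & <-).
      exists z; split; [apply PQ |]; auto.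
    + intros (z & Pz & <-); apply PQ; auto.
Qed.

Lemma S_rel_transport i x : D x -> S_rel lt i x <-> S_rel lt i (h x).
Proof.
  intros Dx; apply has_card_transport.
  - intros z; exact (successor_closed slo D D_s_closed x z Dx).
  - intros w; exact (successor_closed slo D' D'_s_closed (h x) w (h_maps x Dx)).
  - intros z Dz; apply is_successor_transport; assumption.
Qed.

Lemma P_rel_transport j x : D x -> P_rel lt j x <-> P_rel lt j (h x).
Proof.
  intros Dx; apply has_card_transport.
  - intros z; exact (predecessor_closed slo D D_p_closed x z Dx).
  - intros w; exact (predecessor_closed slo D' D'_p_closed (h x) w (h_maps x Dx)).
  - intros z Dz; apply is_successor_transport; assumption.
Qed.

Lemma Adj_rel_transport k x y :
  D x -> D y -> Adj_rel lt k x y <-> Adj_rel lt k (h x) (h y).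
Proof.
  intros Dx Dy; destruct (classic (finite_set (between lt x y))) as [Hfin | Hinf].
  - apply has_card_transport.
    + intros z; exact (finite_interval_closed slo D D_s_closed D_p_closed x y z Dx Hfin).
    + intros w; apply (finite_interval_closed slo D' D'_s_closed D'_p_closed _ _ w (h_maps x Dx)).
      apply (finite_between_transport x y Dx Dy), Hfin.
    + intros z Dz; unfold between.
      rewrite (h_order x z), (h_order z y), (h_order y z), (h_order z x) by assumption.
      reflexivity.
  - split; intros Hcard; exfalso; apply Hinf.
    + exact (has_card_finite _ _ Hcard).
    + apply (finite_between_transport x y Dx Dy), (has_card_finite _ _ Hcard).
Qed.

End Transport.

Theorem mainTheorem6 (n m : option nat) (L : Type) (lt : L -> L -> Prop) :
  strict_linear_order lt ->
  Cnm_homogeneous lt n m ->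
  sp_homogeneous lt.
Proof.
  intros slo HC F G f f_maps f_onto f_order f_s f_p.
  destruct (HC F (map f F) f) as (g & g_bij & g_order & _ & _ & _ & g_f).
  - intros x Fx; apply in_map, Fx.
  - intros y Hy; apply in_map_iff in Hy as (x & <- & Fx); exists x; auto.
  - intros x y Fx Fy; apply f_order; apply gen_base; assumption.
  - intros i x _ Fx; apply (S_rel_transport slo (gen lt F) (gen lt G));
      eauto using gen_s, gen_base.
  - intros j x _ Fx; apply (P_rel_transport slo (gen lt F) (gen lt G));
      eauto using gen_s, gen_p, gen_base.
  - intros k x y _ Fx Fy; apply (Adj_rel_transport slo (gen lt F) (gen lt G));
      eauto using gen_s, gen_p, gen_base.
  - pose proof (s_fn_automorphism slo g g_bij g_order) as g_s.
    pose proof (p_fn_automorphism slo g g_bij g_order) as g_p.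
    exists g; split; [exact g_bij | split; [exact g_order | split; [exact g_s | split; [exact g_p |]]]].
    intros x Hx; induction Hx as [x Fx | x Hx IH | x Hx IH].
    + apply g_f, Fx.
    + rewrite g_s, IH, f_s by exact Hx; reflexivity.
    + rewrite g_p, IH, f_p by exact Hx; reflexivity.
Qed.
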